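(* Let $L$ be a distributive lattice with $|L|\ge2$. Then: (1) $\mathrm{FBL}\langle L\rangle$ is not Dedekind $\sigma$-complete; (2) the norm of $\mathrm{FBL}\langle L\rangle$ is not order continuous; (3) $\mathrm{FBL}\langle L\rangle$ has no atoms.
   Context: $L^*$ is the set of all lattice homomorphisms $x^*:L\to[-1,1]$; for $x\in L$, $\delta_x:L^*\to\mathbb R$ is $\delta_x(x^* )=x^*(x)$. A function $f:L^*\to\mathbb R$ is positively homogeneous if $f(\lambda x^* )=\lambda f(x^* )$ whenever $\lambda\ge0$ and $\lambda x^*\in L^*$; for such $f$, $\|f\|=\sup\{\sum_{i=1}^m|f(x_i^* )|: m\in\mathbb N,\ x_i^*\in L^*,\ \sup_{x\in L}\sum_{i=1}^m|x_i^*(x)|\le1\}$. $\mathrm{FBL}\langle L\rangle$ is the norm closure of the vector sublattice generated by $\{\delta_x:x\in L\}$ inside the Banach lattice of positively homogeneous functions on $L^*$ with finite norm, with pointwise order and operations. *)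

From HB Require Import structures.
From mathcomp Require Import all_boot all_order all_algebra.
From mathcomp Require Import classical_sets reals.
Set Implicit Arguments. Unset Strict Implicit. Unset Printing Implicit Defensive.
Import Order.TTheory GRing.Theory Num.Theory.
Local Open Scope ring_scope.

Section FBL.
Variables (R : realType) (d : Order.disp_t) (L : distrLatticeType d).

Definition is_Lstar (h : L -> R) : Prop :=
  (forall a, -1 <= h a <= 1) /\
  (forall a b, h (Order.meet a b) = Num.min (h a) (h b)) /\
  (forall a b, h (Order.join a b) = Num.max (h a) (h b)).

Record Lstar := MkLstar { lsfun :> L -> R; lsprop : is_Lstar lsfun }.

Definition LFun := Lstar -> R.

Definition delta (x : L) : LFun := fun xs => xs x.

Definition pos_homogeneous (f : LFun) : Prop :=
  forall (xs ys : Lstar) (lam : R), 0 <= lam ->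
    (forall a, ys a = lam * xs a) -> f ys = lam * f xs.

Definition norm_set (f : LFun) : set R :=
  [set s | exists (m : nat) (X : 'I_m -> Lstar),
      (forall a : L, \sum_(i < m) `|X i a| <= 1) /\
      s = \sum_(i < m) `|f (X i)|].

Definition fnorm (f : LFun) : R := sup (norm_set f).

Definition inH (f : LFun) : Prop := pos_homogeneous f /\ has_ubound (norm_set f).

Inductive inFVL : LFun -> Prop :=
  | FVL_delta x : inFVL (delta x)
  | FVL_zero : inFVL (fun _ => 0)
  | FVL_add f g : inFVL f -> inFVL g -> inFVL (fun xs => f xs + g xs)
  | FVL_scale (c : R) f : inFVL f -> inFVL (fun xs => c * f xs)
  | FVL_max f g : inFVL f -> inFVL g -> inFVL (fun xs => Num.max (f xs) (g xs))
  | FVL_min f g : inFVL f -> inFVL g -> inFVL (fun xs => Num.min (f xs) (g xs)).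

Definition inFBL (f : LFun) : Prop :=
  inH f /\ forall eps : R, 0 < eps ->
    exists g, inFVL g /\ fnorm (fun xs => f xs - g xs) < eps.

Definition fle (f g : LFun) : Prop := forall xs, f xs <= g xs.

Definition is_sup_in (S A : LFun -> Prop) (s : LFun) : Prop :=
  S s /\ (forall a, A a -> fle a s) /\
  (forall t, S t -> (forall a, A a -> fle a t) -> fle s t).

Definition is_inf_in (S A : LFun -> Prop) (s : LFun) : Prop :=
  S s /\ (forall a, A a -> fle s a) /\
  (forall t, S t -> (forall a, A a -> fle t a) -> fle t s).

(* Dedekind sigma-completeness: every countable (nonempty) subset which is
   bounded above has a supremum. Countable nonempty subsets = ranges of sequences. *)
Definition dedekind_sigma_complete (S : LFun -> Prop) : Prop :=
  forall u : nat -> LFun, (forall n, S (u n)) ->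
    (exists b, S b /\ forall n, fle (u n) b) ->
    exists s, is_sup_in S (fun a => exists n, a = u n) s.

Definition order_continuous_norm (S : LFun -> Prop) : Prop :=
  forall (I : Type) (le : I -> I -> Prop) (x : I -> LFun),
    (exists i : I, True) ->
    (forall i, le i i) ->
    (forall i j k, le i j -> le j k -> le i k) ->
    (forall i j, exists k, le i k /\ le j k) ->
    (forall i, S (x i)) ->
    (forall i j, le i j -> fle (x j) (x i)) ->
    is_inf_in S (fun a => exists i, a = x i) (fun _ => 0) ->
    forall eps : R, 0 < eps -> exists i0, forall i, le i0 i -> fnorm (x i) < eps.

Definition is_atom (S : LFun -> Prop) (a : LFun) : Prop :=
  S a /\ fle (fun _ => 0) a /\ (exists xs, a xs <> 0) /\
  forall g, S g -> fle (fun _ => 0) g -> fle g a ->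
    exists lam : R, 0 <= lam /\ forall xs, g xs = lam * a xs.

End FBL.

From HB Require Import structures.
From mathcomp Require Import all_boot all_order all_algebra.
From mathcomp Require Import classical_sets boolp reals.
From mathcomp Require Import ring lra.
Import Order.TTheory GRing.Theory Num.Theory.
Set Implicit Arguments. Unset Strict Implicit. Unset Printing Implicit Defensive.
Local Open Scope ring_scope.

(* Every element of FBL<L> is a uniform limit of lattice-linear expressions in
   finitely many [delta x], hence positively homogeneous and uniformly continuous
   for the sup-distance on L^*.  Since |L| >= 2, a prime filter provides a
   {0,1}-valued [w] in L^* with [w p = 0] and [w q = 1], and perturbations of
   the form [al + be * w] stay in L^*.
   (1) The sequence [ramp 1 n = min(|delta p|, n (delta q - delta p - |delta p|)^+)]
       is bounded by [|delta p|]; its pointwise supremum is discontinuous, and a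
       supremum in FBL would indeed be [>= r] at [r + r (1 + e) w] but [<= 0] at
       the nearby point [r + r (1 - e) w], where [ramp (1 - e) e^-1] vanishes.
   (2) The net [(|delta p| - n max_{x in G} |delta x - delta p|)^+] decreases to
       0 in FBL, since every lower bound is <= 0 at the dense set of non-constant
       functionals, yet each term equals 1 at the constant functional 1.
   (3) If [a] were an atom, [a `min` h] would be a multiple of [a] for every
       positive [h] of the generated sublattice; an [h] vanishing at one point
       where [a > 0] but not at a nearby one contradicts this. *)

Section MinMaxInequalities.
Variable R : realFieldType.
Implicit Types a b : R.

Lemma normr_maxr_le a b : `|Num.max a b| <= `|a| + `|b|.
Proof.
have := ler_norm a; have := ler_norm (- a); have := ler_norm b; have := ler_norm (- b).
rewrite !normrN => *.
by case: (leP a b) => _; rewrite ler_norml; apply/andP; split; lra.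
Qed.

Lemma normr_minr_le a b : `|Num.min a b| <= `|a| + `|b|.
Proof.
have := ler_norm a; have := ler_norm (- a); have := ler_norm b; have := ler_norm (- b).
rewrite !normrN => *.
by case: (leP a b) => _; rewrite ler_norml; apply/andP; split; lra.
Qed.

Lemma normr_maxrB (a b a' b' : R) :
  `|Num.max a b - Num.max a' b'| <= `|a - a'| + `|b - b'|.
Proof.
have := ler_norm (a - a'); have := ler_norm (a' - a).
have := ler_norm (b - b'); have := ler_norm (b' - b).
rewrite (distrC a') (distrC b') => *.
by case: (leP a b) => ?; case: (leP a' b') => ?; rewrite ler_norml;
  apply/andP; split; lra.
Qed.

Lemma normr_minrB (a b a' b' : R) :
  `|Num.min a b - Num.min a' b'| <= `|a - a'| + `|b - b'|.
Proof.
have := ler_norm (a - a'); have := ler_norm (a' - a).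
have := ler_norm (b - b'); have := ler_norm (b' - b).
rewrite (distrC a') (distrC b') => *.
by case: (leP a b) => ?; case: (leP a' b') => ?; rewrite ler_norml;
  apply/andP; split; lra.
Qed.

Lemma minr_ramp_le (P D c e n : R) : 0 <= P -> 0 < e -> 0 <= n ->
  Num.min P (n * Num.max (D - c * P) 0) <=
  Num.min P (e^-1 * Num.max (D - (c - e) * P) 0).
Proof.
move=> P0 e0 n0; have ek : e^-1 * e = 1 by rewrite mulVf // gt_eqF.
have k0 : 0 < e^-1 by rewrite invr_gt0.
case: (leP (D - c * P) 0) => [nonpos | pos].
  rewrite mulr0 (min_r P0) le_min P0 /=; apply: mulr_ge0; first exact: ltW.
  by rewrite le_max lexx orbT.
rewrite max_l; last by nra.
have steep : P <= e^-1 * (D - (c - e) * P) by nra.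
by rewrite (min_l steep) ge_min lexx.
Qed.

Lemma exists_small_pos (dl : R) : 0 < dl -> exists e : R, [/\ 0 < e, e <= 1 & 2 * e <= dl].
Proof.
move=> dl0; exists (Num.min (dl / 2) 1).
by case: (leP (dl / 2) 1) => h; split; lra.
Qed.

End MinMaxInequalities.

Section PrimeFilters.
Local Open Scope classical_set_scope.
Variables (d : Order.disp_t) (L : distrLatticeType d).

Definition lattice_filter (M : set L) :=
  (forall x y, M x -> M y -> M (x `&` y)%O) /\ (forall x y, M x -> (x <= y)%O -> M y).

Definition join_prime (M : set L) := forall x y, M (x `|` y)%O -> M x \/ M y.

Lemma filter_adjoin (M : set L) (z : L) : lattice_filter M ->
  lattice_filter [set u | exists2 m, M m & (m `&` z <= u)%O].
Proof.
move=> [Mmeet Mup]; split => [u v [m Mm mu] [m' Mm' mv] | u v [m Mm mu] uv].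
  exists (m `&` m')%O; first exact: Mmeet.
  by rewrite lexI; apply/andP; split; [apply: le_trans mu | apply: le_trans mv];
    apply: leI2; rewrite ?leIl ?leIr.
by exists m => //; apply: le_trans uv.
Qed.

Lemma prime_filter_separation (p q : L) : ~ (q <= p)%O ->
  exists M : set L, [/\ lattice_filter M, join_prime M, M q & ~ M p].
Proof.
move=> nqp.
(* The last clause makes the empty set, hence the union of the empty chain, admissible. *)
pose P (A : set L) := [/\ lattice_filter A, ~ A p & forall x, A x -> A q].
have [M [[[Mmeet Mup] Mp Mq] Mmax]] : exists A, P A /\ forall B, A `<` B -> ~ P B.
  apply: Zorn_bigcup => F FP Ftot; split; first split.
  - move=> x y [X FX Xx] [Y FY Yy].
    have [XY|YX] := Ftot _ _ FX FY.
      by exists Y => //; have [[Ymeet _] _ _] := FP _ FY; apply: Ymeet => //; apply: XY.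
    by exists X => //; have [[Xmeet _] _ _] := FP _ FX; apply: Xmeet => //; apply: YX.
  - by move=> x y [X FX Xx] xy; exists X => //; have [[_ Xup] _ _] := FP _ FX; apply: Xup xy.
  - by move=> [X FX Xp]; have [_ nXp _] := FP _ FX; apply: nXp.
  - by move=> x [X FX Xx]; exists X => //; have [_ _ Xq] := FP _ FX; apply: Xq Xx.
have Mq' : M q.
  apply: contrapT => nMq; apply: (Mmax [set y | (q <= y)%O]).
    by split=> [x /Mq /nMq [] | sub]; apply/nMq/sub/lexx.
  split=> [|//|x _ /=]; last exact: lexx.
  split=> [x y qx qy | x y qx xy]; first by rewrite /= lexI qx.
  exact: le_trans xy.
have adjoin_p z : ~ M z -> exists2 m, M m & (m `&` z <= p)%O.
  move=> nMz; apply: contrapT => nzp.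
  apply: (Mmax [set u | exists2 m, M m & (m `&` z <= u)%O]).
    split=> [u Mu | /(_ z) Mz]; first by exists u => //; exact: leIl.
    by apply: nMz; apply: Mz; exists q => //; exact: leIr.
  split; first exact: filter_adjoin.
    by move=> [m Mm mp]; apply: nzp; exists m.
  by move=> u _; exists q => //; exact: leIl.
exists M; split=> //.
move=> x y Mxy; apply: contrapT => /not_orP [/adjoin_p [m Mm mx] /adjoin_p [m' Mm' my]].
apply: Mp; apply: Mup (Mmeet _ _ (Mmeet _ _ Mm Mm') Mxy) _.
by rewrite meetUr leUx; apply/andP; split; [apply: le_trans mx | apply: le_trans my];
  apply: leI2; rewrite ?leIl ?leIr.
Qed.

End PrimeFilters.

Section FreeBanachLattice.
Variables (R : realType) (d : Order.disp_t) (L : distrLatticeType d).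
Local Notation LF := (LFun R L).
Local Notation Ls := (Lstar R L).

Lemma Lstar_bound (xs : Ls) x : -1 <= xs x <= 1.
Proof. by have [+ _] := lsprop xs; apply. Qed.

Lemma const_is_Lstar (c : R) : -1 <= c <= 1 -> is_Lstar (fun _ : L => c).
Proof. by move=> c1; split=> [//|]; split=> *; rewrite ?minxx ?maxxx. Qed.

Lemma affine_Lstar (w : Ls) (al be : R) : 0 <= be -> `|al| + be <= 1 ->
  exists z : Ls, forall x, z x = al + be * w x.
Proof.
move=> be0 small; have [_ [wmeet wjoin]] := lsprop w.
suff zP : is_Lstar (fun x => al + be * w x) by exists (MkLstar zP).
split=> [x|]; last split=> x y.
  rewrite -ler_norml (le_trans (ler_normD _ _)) // normrM (ger0_norm be0).
  by rewrite (le_trans _ small) // lerD2l ler_piMr // ler_norml Lstar_bound.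
  by rewrite wmeet minr_pMr // addr_minr.
by rewrite wjoin maxr_pMr // addr_maxr.
Qed.

Lemma indicator_is_Lstar (M : set L) : lattice_filter M -> join_prime M ->
  is_Lstar (fun x => if `[< M x >] then 1 else 0 : R).
Proof.
move=> [Mmeet Mup] Mprime.
have meetE x y : `[< M (x `&` y)%O >] = `[< M x >] && `[< M y >].
  apply/asboolP/andP => [Mxy | [/asboolP Mx /asboolP My]]; last exact: Mmeet.
  by split; apply/asboolP; apply: Mup Mxy _; rewrite ?leIl ?leIr.
have joinE x y : `[< M (x `|` y)%O >] = `[< M x >] || `[< M y >].
  apply/asboolP/orP => [/Mprime [] /asboolP | [/asboolP Mx | /asboolP My]];
    [by left | by right | exact: Mup Mx (leUl _ _) | exact: Mup My (leUr _ _)].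
split; [move=> x | split=> x y]; rewrite ?meetE ?joinE.
- by case: `[< M x >]; apply/andP; split; lra.
- by case: `[< M x >]; case: `[< M y >]; rewrite /= ?minxx ?(min_l ler01) ?(min_r ler01).
- by case: `[< M x >]; case: `[< M y >]; rewrite /= ?maxxx ?(max_l ler01) ?(max_r ler01).
Qed.

Lemma exists_Lstar01 : (exists a b : L, a <> b) ->
  exists (w : Ls) (p q : L), w p = 0 /\ w q = 1.
Proof.
move=> [a [b ab]].
have nqp : ~ (a `|` b <= a `&` b)%O.
  move=> qp; apply: ab; apply/eqP; rewrite eq_le.
  by rewrite (le_trans (leUl a b) (le_trans qp (leIr b a)))
             (le_trans (leUr b a) (le_trans qp (leIl a b))).
have [M [Mfilter Mprime Mq Mp]] := prime_filter_separation nqp.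
exists (MkLstar (indicator_is_Lstar Mfilter Mprime)), (a `&` b)%O, (a `|` b)%O => /=.
by case: asboolP; case: asboolP.
Qed.

Lemma inFVL_ext (f g : LF) : inFVL f -> (forall xs, f xs = g xs) -> inFVL g.
Proof. by move=> hf fg; rewrite -(funext fg). Qed.

Lemma inFVL_opp (f : LF) : inFVL f -> inFVL (fun xs => - f xs).
Proof. by move=> hf; apply: inFVL_ext (FVL_scale (-1) hf) _ => xs; rewrite mulN1r. Qed.

Lemma inFVL_sub (f g : LF) : inFVL f -> inFVL g -> inFVL (fun xs => f xs - g xs).
Proof. by move=> hf hg; exact: FVL_add hf (inFVL_opp hg). Qed.

Lemma inFVL_abs (f : LF) : inFVL f -> inFVL (fun xs => `|f xs|).
Proof.
by move=> hf; apply: inFVL_ext (FVL_max hf (inFVL_opp hf)) _ => xs; rewrite maxrN.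
Qed.

Lemma inFVL_pos_homogeneous (g : LF) : inFVL g -> pos_homogeneous g.
Proof.
elim=> {g} [x | | f g _ hf _ hg | c f _ hf | f g _ hf _ hg | f g _ hf _ hg]
  xs ys lam lam0 yxs //=.
- by rewrite /delta yxs.
- by rewrite mulr0.
- by rewrite (hf _ _ _ lam0 yxs) (hg _ _ _ lam0 yxs) mulrDr.
- by rewrite (hf _ _ _ lam0 yxs) mulrCA.
- by rewrite (hf _ _ _ lam0 yxs) (hg _ _ _ lam0 yxs) maxr_pMr.
- by rewrite (hf _ _ _ lam0 yxs) (hg _ _ _ lam0 yxs) minr_pMr.
Qed.

Lemma inFVL_lipschitz (g : LF) : inFVL g -> exists2 C : R, 0 <= C &
  forall (xs ys : Ls) dl, (forall x, `|xs x - ys x| <= dl) -> `|g xs - g ys| <= C * dl.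
Proof.
elim=> {g} [x | | f g _ [C1 C10 hf] _ [C2 C20 hg] | c f _ [C C0 hf]
            | f g _ [C1 C10 hf] _ [C2 C20 hg] | f g _ [C1 C10 hf] _ [C2 C20 hg]].
- by exists 1 => // xs ys dl; rewrite mul1r; apply.
- by exists 0 => // xs ys dl _; rewrite subrr normr0 mul0r.
- exists (C1 + C2) => [|xs ys dl near]; first exact: addr_ge0.
  rewrite mulrDl (le_trans _ (lerD (hf _ _ _ near) (hg _ _ _ near))) //.
  by rewrite opprD addrACA ler_normD.
- exists (`|c| * C) => [|xs ys dl near]; first exact: mulr_ge0.
  by rewrite -mulrBr normrM -mulrA ler_wpM2l // hf.
- exists (C1 + C2) => [|xs ys dl near]; first exact: addr_ge0.
  by rewrite mulrDl (le_trans (normr_maxrB _ _ _ _)) // lerD ?hf ?hg.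
- exists (C1 + C2) => [|xs ys dl near]; first exact: addr_ge0.
  by rewrite mulrDl (le_trans (normr_minrB _ _ _ _)) // lerD ?hf ?hg.
Qed.

Lemma norm_set0 (f : LF) : norm_set f 0.
Proof.
exists 0%N, (fun=> MkLstar (@const_is_Lstar 0 ltac:(lra))).
by split=> [a|]; rewrite big_ord0.
Qed.

Lemma norm_set_ubound0 : has_ubound (norm_set (fun _ : Ls => 0)).
Proof. by exists 0 => _ [m [X [_ ->]]]; rewrite big1 // normr0. Qed.

Lemma norm_set_ubound_delta x : has_ubound (norm_set (@delta R d L x)).
Proof. by exists 1 => _ [m [X [admissible ->]]]; exact: admissible. Qed.

Lemma norm_set_ubound_scale (f g : LF) (c : R) : 0 <= c ->
  has_ubound (norm_set g) -> (forall xs, `|f xs| <= c * `|g xs|) ->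
  has_ubound (norm_set f).
Proof.
move=> c0 [B gB] fg; exists (c * B) => _ [m [X [admissible ->]]].
apply: le_trans (ler_sum _ (fun i _ => fg (X i))) _.
by rewrite -mulr_sumr ler_wpM2l // gB //; exists m, X.
Qed.

Lemma norm_set_ubound_add (f f1 f2 : LF) :
  has_ubound (norm_set f1) -> has_ubound (norm_set f2) ->
  (forall xs, `|f xs| <= `|f1 xs| + `|f2 xs|) -> has_ubound (norm_set f).
Proof.
move=> [B1 f1B] [B2 f2B] ff; exists (B1 + B2) => _ [m [X [admissible ->]]].
apply: le_trans (ler_sum _ (fun i _ => ff (X i))) _.
by rewrite big_split lerD // ?f1B ?f2B //; exists m, X.
Qed.

Lemma norm_set_uboundB (f g : LF) :
  has_ubound (norm_set f) -> has_ubound (norm_set g) ->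
  has_ubound (norm_set (fun xs => f xs - g xs)).
Proof. by move=> uf ug; apply: norm_set_ubound_add uf ug _ => xs; exact: ler_normB. Qed.

Lemma inFVL_norm_set_ubound (g : LF) : inFVL g -> has_ubound (norm_set g).
Proof.
elim=> {g} [x | | f g _ uf _ ug | c f _ uf | f g _ uf _ ug | f g _ uf _ ug].
- exact: norm_set_ubound_delta.
- exact: norm_set_ubound0.
- by apply: norm_set_ubound_add uf ug _ => xs; exact: ler_normD.
- by apply: (norm_set_ubound_scale (c := `|c|)) uf _ => [|xs]; rewrite ?normrM.
- by apply: norm_set_ubound_add uf ug _ => xs; exact: normr_maxr_le.
- by apply: norm_set_ubound_add uf ug _ => xs; exact: normr_minr_le.
Qed.

Lemma normr_le_fnorm (f : LF) xs : has_ubound (norm_set f) -> `|f xs| <= fnorm f.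
Proof.
move=> uf; apply: ub_le_sup => //; exists 1%N, (fun=> xs).
by split=> [a|]; rewrite big_ord1 // ler_norml; exact: Lstar_bound.
Qed.

Lemma le_fnorm (f g : LF) : has_ubound (norm_set g) ->
  (forall xs, `|f xs| <= `|g xs|) -> fnorm f <= fnorm g.
Proof.
move=> ug fg; apply: ge_sup; first by exists 0; exact: norm_set0.
move=> _ [m [X [admissible ->]]].
apply: le_trans (ler_sum _ (fun i _ => fg (X i))) _.
by apply: ub_le_sup => //; exists m, X.
Qed.

Lemma fnorm_le0 (f : LF) : (forall xs, f xs = 0) -> fnorm f <= 0.
Proof.
move=> f0; apply: ge_sup; first by exists 0; exact: norm_set0.
by move=> _ [m [X [_ ->]]]; rewrite big1 // => i _; rewrite f0 normr0.
Qed.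

Lemma inFVL_inFBL (g : LF) : inFVL g -> inFBL g.
Proof.
move=> hg; split; first by split; [exact: inFVL_pos_homogeneous | exact: inFVL_norm_set_ubound].
move=> eps eps0; exists g; split=> //.
by apply: le_lt_trans (fnorm_le0 _) eps0 => xs; exact: subrr.
Qed.

Lemma inFBL_minr (f h : LF) : inFBL f -> inFVL h ->
  inFBL (fun xs => Num.min (f xs) (h xs)).
Proof.
move=> [[phf uf] approx] hh; have uh := inFVL_norm_set_ubound hh.
split; first split.
- move=> xs ys lam lam0 yxs.
  by rewrite (phf _ _ _ lam0 yxs) (inFVL_pos_homogeneous hh lam0 yxs) minr_pMr.
- by apply: norm_set_ubound_add uf uh _ => xs; exact: normr_minr_le.
move=> eps eps0; have [g [hg fg]] := approx eps eps0.
exists (fun xs => Num.min (g xs) (h xs)); split; first exact: FVL_min.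
apply: le_lt_trans fg; apply: le_fnorm => [|xs].
  exact: norm_set_uboundB uf (inFVL_norm_set_ubound hg).
by have := normr_minrB (f xs) (h xs) (g xs) (h xs); rewrite subrr normr0 addr0.
Qed.

(* Uniform limits of Lipschitz functions are uniformly continuous. *)
Lemma inFBL_continuous (f : LF) : inFBL f -> forall eps : R, 0 < eps ->
  exists2 dl : R, 0 < dl & forall z1 z2 : Ls,
    (forall x, `|z1 x - z2 x| <= dl) -> `|f z1 - f z2| < eps.
Proof.
move=> [[_ uf] approx] eps eps0.
have eps3 : 0 < eps / 3 by rewrite divr_gt0.
have [g [hg fg]] := approx _ eps3.
have close xs : `|f xs - g xs| < eps / 3.
  exact: le_lt_trans (normr_le_fnorm _ (norm_set_uboundB uf (inFVL_norm_set_ubound hg))) fg.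
have [C C0 g_lip] := inFVL_lipschitz hg.
exists (eps / 3 / (C + 1)) => [|z1 z2 near]; first by rewrite divr_gt0 // ltr_wpDl.
have gz : `|g z1 - g z2| <= eps / 3.
  apply: le_trans (g_lip _ _ _ near) _.
  by rewrite mulrA ler_pdivrMr ?ltr_wpDl // mulrDr mulr1 mulrC; lra.
have := close z1; have := close z2; rewrite (distrC (f z2)).
have := ler_distD (g z1) (f z1) (f z2); have := ler_distD (g z2) (g z1) (f z2).
lra.
Qed.

Lemma inFBL_gt0_near (f : LF) (xs0 : Ls) : inFBL f -> 0 < f xs0 ->
  exists2 dl : R, 0 < dl & forall z : Ls,
    (forall x, `|z x - xs0 x| <= dl) -> 0 < f z.
Proof.
move=> ff fpos; have [dl dl0 fcont] := inFBL_continuous ff fpos.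
exists dl => // z near; have := fcont _ _ near; have := ler_norm (f xs0 - f z).
rewrite distrC; lra.
Qed.

(* [a `min` h] lies between 0 and [a], hence is a multiple of [a]; its zero at [z2]
   forces the multiple to be 0. *)
Lemma atom_nonneg_FVL_eq0 (a h : LF) (z1 z2 : Ls) :
  is_atom (@inFBL R d L) a -> inFVL h -> (forall xs, 0 <= h xs) ->
  0 < a z1 -> 0 < a z2 -> h z2 = 0 -> h z1 = 0.
Proof.
move=> [fa [a0 [_ atom]]] hh h0 az1 az2 hz2.
have [lam [lam0 ahE]] : exists lam : R, 0 <= lam /\
    forall xs, Num.min (a xs) (h xs) = lam * a xs.
  by apply: atom (inFBL_minr fa hh) _ _ => xs; rewrite ?le_min ?a0 ?h0 ?ge_min ?lexx.
have lamE : lam = 0.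
  move: (ahE z2); rewrite hz2 (min_r (ltW az2)) => /esym/eqP.
  by rewrite mulf_eq0 (gt_eqF az2) orbF => /eqP.
move: (ahE z1); rewrite lamE mul0r => /eqP; rewrite eq_sym eq_le ge_min le_min.
by rewrite (lt_geF az1) /= => /andP[_ hz1]; apply/eqP; rewrite eq_le hz1 h0.
Qed.

Definition dispersion (a : L) (G : seq L) : LF :=
  fun xs => \big[Num.max/0]_(x <- G) `|xs x - xs a|.

Lemma dispersion_FVL a G : inFVL (dispersion a G).
Proof.
elim: G => [|y G IH]; first by apply: inFVL_ext (FVL_zero _ _) _ => xs; rewrite /dispersion big_nil.
apply: inFVL_ext (FVL_max (inFVL_abs (inFVL_sub (FVL_delta _ y) (FVL_delta _ a))) IH) _.
by move=> xs; rewrite /dispersion big_cons.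
Qed.

Lemma dispersion_subset a G G' xs : {subset G <= G'} ->
  dispersion a G xs <= dispersion a G' xs.
Proof.
move=> GG'; rewrite /dispersion big_seq; apply: bigmax_le => [|x xG].
  exact: bigmax_ge_id.
exact: le_bigmax_seq (GG' x xG) isT.
Qed.

Definition dispersion_net (a : L) (i : seq L * nat) : LF :=
  fun xs => Num.max (`|xs a| - i.2%:R * dispersion a i.1 xs) 0.

Lemma dispersion_net_FVL a i : inFVL (dispersion_net a i).
Proof.
apply/FVL_max/FVL_zero/inFVL_sub/FVL_scale/dispersion_FVL.
exact/inFVL_abs/FVL_delta.
Qed.

Lemma dispersion_net_antitone a (i j : seq L * nat) xs :
  {subset i.1 <= j.1} -> (i.2 <= j.2)%N -> dispersion_net a j xs <= dispersion_net a i xs.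
Proof.
move=> ij1 ij2; rewrite /dispersion_net le_max2 // lerD2l lerN2.
by rewrite ler_pM ?ler_nat ?dispersion_subset //; exact: bigmax_ge_id.
Qed.

Lemma dispersion_net_vanish a (xs : Ls) y : xs y != xs a ->
  exists i, dispersion_net a i xs = 0.
Proof.
rewrite -subr_eq0 -normr_gt0 => ypos.
have /archi_boundP n_gt : 0 <= `|xs a| / `|xs y - xs a| by rewrite divr_ge0.
exists ([:: y], Num.bound (`|xs a| / `|xs y - xs a|)); apply/max_idPr.
rewrite /= /dispersion big_cons big_nil (max_l (normr_ge0 _)) subr_le0 ltW //.
by rewrite -ltr_pdivrMr.
Qed.

Lemma dispersion_net_const a i (xs : Ls) (c : R) : (forall u, xs u = c) ->
  dispersion_net a i xs = `|c|.
Proof.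
move=> xsE; rewrite /dispersion_net; have -> : dispersion a i.1 xs = 0.
  apply/eqP; rewrite eq_le bigmax_ge_id andbT.
  by apply: bigmax_le => // y _; rewrite !xsE subrr normr0.
by rewrite mulr0 subr0 xsE (max_l (normr_ge0 _)).
Qed.

Section NonconstantHomomorphism.
Variables (w : Ls) (p q : L).
Hypotheses (wp : w p = 0) (wq : w q = 1).

Lemma exists_Lstar_near_const (xs : Ls) (dl : R) : 0 < dl ->
  (forall u, xs u = xs p) ->
  exists2 z : Ls, (forall u, `|z u - xs u| <= dl) & z q != z p.
Proof.
move=> dl0 xs_const; have [e [e0 e1 edl]] := exists_small_pos dl0.
have [z zE] : exists z : Ls, forall u, z u = (1 - e) * xs p + e * w u.
  apply: affine_Lstar; first lra.
  rewrite normrM (@ger0_norm _ (1 - e)); last lra.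
  by have := Lstar_bound xs p; rewrite -ler_norml; nra.
exists z => [u|]; last by rewrite !zE wp wq mulr0 mulr1 addr0 -subr_eq0 addrAC subrr add0r gt_eqF.
rewrite zE xs_const; have /andP[? ?] := Lstar_bound w u; have /andP[? ?] := Lstar_bound xs p.
by rewrite ler_norml; apply/andP; split; nra.
Qed.

Lemma FBL_no_atom : ~ exists a : LF, is_atom (@inFBL R d L) a.
Proof.
move=> [a atom_a]; have [fa [a0 [[xs0 /eqP axs0] _]]] := atom_a.
have apos : 0 < a xs0 by rewrite lt_def axs0 a0.
have [dl dl0 a_near] := inFBL_gt0_near fa apos.
case: (pselect (exists x y, xs0 x <> xs0 y)) => [[x [y nxy]] | const].
- have [e [e0 e1 edl]] := exists_small_pos dl0.
  have [z zE] : exists z : Ls, forall u, z u = e + (1 - e) * xs0 u.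
    by apply: affine_Lstar; rewrite ?ger0_norm; lra.
  (* [z] is close to [xs0] but not proportional to it, which [h] detects. *)
  pose h (xs : Ls) := `|z y * xs x - z x * xs y|.
  have hFVL : inFVL h.
    by apply/inFVL_abs/inFVL_sub; apply: FVL_scale; exact: FVL_delta.
  have hxs0 : h xs0 = 0.
    apply: (atom_nonneg_FVL_eq0 (z2 := z) atom_a hFVL (fun=> normr_ge0 _) apos);
      last by rewrite /h /= mulrC subrr normr0.
    apply: a_near => u; rewrite zE; have /andP[? ?] := Lstar_bound xs0 u.
    by rewrite ler_norml; apply/andP; split; nra.
  move/eqP: hxs0; rewrite normr_eq0 !zE.
  have -> : (e + (1 - e) * xs0 y) * xs0 x - (e + (1 - e) * xs0 x) * xs0 y =
            e * (xs0 x - xs0 y) by ring.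
  by rewrite mulf_eq0 subr_eq0 (gt_eqF e0) => /eqP.
- have xs0_const u : xs0 u = xs0 p.
    by apply: contrapT => ne; apply: const; exists u, p.
  have [z near zqp] := exists_Lstar_near_const dl0 xs0_const.
  pose h (xs : Ls) := `|xs q - xs p|.
  have hFVL : inFVL h by apply/inFVL_abs/inFVL_sub; exact: FVL_delta.
  have hz : h z = 0.
    apply: (atom_nonneg_FVL_eq0 atom_a hFVL (fun=> normr_ge0 _) (a_near z near) apos).
    by rewrite /h !xs0_const subrr normr0.
  by move/eqP: hz; rewrite normr_eq0 subr_eq0 (negbTE zqp).
Qed.

Definition ramp (c k : R) : LF :=
  fun xs => Num.min `|xs p| (k * Num.max (xs q - xs p - c * `|xs p|) 0).

Lemma ramp_FVL c k : inFVL (ramp c k).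
Proof.
apply: FVL_min; first exact/inFVL_abs/FVL_delta.
apply/FVL_scale/FVL_max/FVL_zero/inFVL_sub/FVL_scale/inFVL_abs/FVL_delta.
by apply: inFVL_sub; exact: FVL_delta.
Qed.

Lemma ramp_affine (z : Ls) (r b c k : R) : 0 <= r ->
  (forall x, z x = r + r * b * w x) ->
  ramp c k z = Num.min r (k * Num.max (r * (b - c)) 0).
Proof.
move=> r0 zE; rewrite /ramp !zE wp wq mulr0 mulr1 addr0 (ger0_norm r0).
by congr (Num.min _ (_ * Num.max _ _)); ring.
Qed.

Lemma FBL_not_sigma_complete : ~ dedekind_sigma_complete (@inFBL R d L).
Proof.
move=> sigma.
have [s [fs [s_ub s_least]]] :
    exists s, is_sup_in (@inFBL R d L) (fun a => exists n, a = ramp 1 n%:R) s.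
  apply: sigma => [n|]; first exact/inFVL_inFBL/ramp_FVL.
  exists (fun xs => `|xs p|); split; first exact/inFVL_inFBL/inFVL_abs/FVL_delta.
  by move=> n xs; rewrite ge_min lexx.
pose r : R := 1 / 8.
have r0 : 0 <= r by rewrite /r; lra.
have r2 : 0 < r / 2 by rewrite /r; lra.
have [dl dl0 s_cont] := inFBL_continuous fs r2.
have [e [e0 e1 edl]] := exists_small_pos dl0.
have [zp zpE] : exists z : Ls, forall x, z x = r + r * (1 + e) * w x.
  by apply: affine_Lstar; rewrite ?ger0_norm // /r; nra.
have [zm zmE] : exists z : Ls, forall x, z x = r + r * (1 - e) * w x.
  by apply: affine_Lstar; rewrite ?ger0_norm // /r; nra.
have s_zp : r <= s zp.
  have /archi_boundP n_gt : 0 <= e^-1 by rewrite invr_ge0 ltW.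
  have ne1 : 1 < (Num.bound e^-1)%:R * e by rewrite -ltr_pdivrMr // div1r.
  apply: le_trans (s_ub (ramp 1 (Num.bound e^-1)%:R) (ex_intro _ _ erefl) zp).
  rewrite (ramp_affine _ _ r0 zpE) max_l; last by rewrite mulr_ge0 // addrAC subrr add0r ltW.
  by rewrite le_min lexx addrAC subrr add0r /=; nra.
have s_zm : s zm <= 0.
  apply: le_trans (s_least (ramp (1 - e) e^-1) (inFVL_inFBL (ramp_FVL _ _)) _ zm) _.
    by move=> _ [n ->] xs; apply: minr_ramp_le => //; exact: ler0n.
  by rewrite (ramp_affine _ _ r0 zmE) subrr mulr0 maxxx mulr0 ge_min lexx orbT.
have := s_cont zp zm; have := ler_norm (s zp - s zm).
suff near : forall x, `|zp x - zm x| <= dl by move=> ? /(_ near); lra.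
move=> x; rewrite zpE zmE; have /andP[? ?] := Lstar_bound w x.
have -> : r + r * (1 + e) * w x - (r + r * (1 - e) * w x) = 2 * r * e * w x by ring.
by rewrite ler_norml /r; apply/andP; split; nra.
Qed.

Lemma dispersion_net_inf :
  is_inf_in (@inFBL R d L) (fun f => exists i, f = dispersion_net p i) (fun=> 0).
Proof.
split; first exact/inFVL_inFBL/FVL_zero.
split=> [_ [i ->] xs | t ft t_lb xs]; first by rewrite le_max lexx orbT.
have t_nonconst (zs : Ls) y : zs y != zs p -> t zs <= 0.
  move=> /dispersion_net_vanish [i net0]; rewrite -net0.
  exact: t_lb _ (ex_intro _ i erefl) zs.
rewrite leNgt; apply/negP => tpos.
have [dl dl0 t_near] := inFBL_gt0_near ft tpos.
have [[y nxy] | const] := pselect (exists y, xs y != xs p).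
  by have := t_nonconst xs y nxy; lra.
have xs_const u : xs u = xs p by apply: contrapT => ne; apply: const; exists u; exact/eqP.
have [z near zqp] := exists_Lstar_near_const dl0 xs_const.
by have := t_nonconst z q zqp; have := t_near z near; lra.
Qed.

Lemma FBL_not_order_continuous : ~ order_continuous_norm (@inFBL R d L).
Proof.
move=> oc.
pose le (i j : seq L * nat) := {subset i.1 <= j.1} /\ (i.2 <= j.2)%N.
have [i0 small] : exists i0, forall i, le i0 i -> fnorm (dispersion_net p i) < 1.
  apply: (oc _ le) dispersion_net_inf _ ltr01 => [|i|i j k [ij1 ij2] [jk1 jk2]|i j|i|i j []].
  - by exists ([::], 0%N).
  - by split.
  - by split=> [y /ij1 /jk1 //|]; exact: leq_trans jk2.
  - exists (i.1 ++ j.1, maxn i.2 j.2).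
    by split; split=> [y yi|]; rewrite /= ?mem_cat ?yi ?orbT ?leq_maxl ?leq_maxr.
  - exact/inFVL_inFBL/dispersion_net_FVL.
  - by move=> ij1 ij2 xs; exact: dispersion_net_antitone.
have one_range : -1 <= (1 : R) <= 1 by rewrite lexx andbT; lra.
pose one := MkLstar (const_is_Lstar one_range).
have := normr_le_fnorm one (inFVL_norm_set_ubound (dispersion_net_FVL p i0)).
have := small i0 (conj (fun _ h => h) (leqnn _)).
by rewrite (dispersion_net_const _ _ (c := 1)) // normr_id normr1; lra.
Qed.

End NonconstantHomomorphism.

End FreeBanachLattice.

Theorem mainTheorem12 (R : realType) (d : Order.disp_t) (L : distrLatticeType d) :
  (exists a b : L, a <> b) ->
  [/\ ~ dedekind_sigma_complete (@inFBL R d L),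
      ~ order_continuous_norm (@inFBL R d L)
    & ~ (exists a : LFun R L, is_atom (@inFBL R d L) a)].
Proof.
move=> nontrivial; have [w [p [q [wp wq]]]] := exists_Lstar01 R nontrivial.
split; [exact: FBL_not_sigma_complete wp wq | exact: FBL_not_order_continuous wp wq
  | exact: FBL_no_atom wp wq].
Qed.
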